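(* Let $p\ge 2$ and let $T$ be a tetrahedron obtained as the image of the reference tetrahedron under a non-degenerate map. Then the collection of matrix-valued functions on $T$ consisting of a basis of $[\mathcal{N}_{II}^1(T)]^3=[\mathit{P}^1(T)]^{3\times3}$ together with all of the following functions is linearly independent: (i) (edge functions) for each edge $j\in\mathcal{J}$ and each $\varphi$ in a basis of $\mathcal{E}^p_j(T)$: $\varphi\,\mathbf{d}_1\otimes\mathbf{t}$ and $\varphi\,\mathbf{d}_2\otimes\mathbf{t}$, with $\mathbf{t},\mathbf{d}_1,\mathbf{d}_2$ the vectors of edge $j$; (ii) (edge-face functions) for each face $k\in\mathcal{K}$ with normal $\mathbf{n}$, each edge $j\in\mathcal{J}_k$ and each $\varphi$ in a basis of $\mathcal{E}^p_j(T)$: $\varphi\,\mathbf{t}\otimes\mathbf{k}$, $\varphi\,\mathbf{m}\otimes\mathbf{k}$, $\varphi\,\mathbf{n}\otimes\mathbf{k}$, where $\mathbf{t}$ is the tangent of edge $j$, $\mathbf{k}$ is the edge-face vector of edge $j$ with $\mathbf{n}\times\mathbf{k}\neq0$, and $\mathbf{m}=\mathbf{Q}\mathbf{k}$ with $\mathbf{Q}=\|\mathbf{n}\|^2\mathbb{1}-\mathbf{n}\otimes\mathbf{n}$; (iii) (face functions) for each face $k\in\mathcal{K}$ with normal $\mathbf{n}$ and each $\varphi$ in a basis of $\mathcal{F}^p_k(T)$, with $j=\min\mathcal{J}_k$, $\mathbf{t}$ the tangent of edge $j$ and $\mathbf{m}=\mathbf{Q}\mathbf{k}$ as in (ii) for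 this edge $j$: $\varphi\,\mathbf{t}\otimes\mathbf{m}$, $\varphi\,\mathbf{m}\otimes\mathbf{t}$, $\varphi(\mathbf{t}\otimes\mathbf{t}-\mathbf{m}\otimes\mathbf{m})$, $\varphi\,\mathbf{n}\otimes\mathbf{t}$, $\varphi\,\mathbf{n}\otimes\mathbf{m}$; (iv) (cell functions) $\varphi\,\mathbb{1}$ for $\varphi$ in a basis of $\bigoplus_{j\in\mathcal{J}}\mathcal{E}^{p+1}_j(T)\oplus\bigoplus_{k\in\mathcal{K}}\mathcal{F}^{p+1}_k(T)\oplus\mathcal{C}^{p+1}(T)$; for each face $k$ and $\varphi$ in a basis of $\mathcal{F}^p_k(T)$, with $\mathbf{t},\mathbf{m},\mathbf{n}$ as in (iii): $\varphi\,\mathbf{t}\otimes\mathbf{n}$, $\varphi\,\mathbf{m}\otimes\mathbf{n}$, $\varphi\,\mathbf{n}\otimes\mathbf{n}$; and $\varphi\,\mathbf{T}$ for $\varphi$ in a basis of $\mathcal{C}^p(T)$ and $\mathbf{T}$ in a basis of $\mathfrak{sl}(3)$ (trace-free $3\times3$ matrices).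
   Context: Reference tetrahedron $\Omega=\{(\xi,\eta,\zeta)\in[0,1]^3:\xi+\eta+\zeta\le1\}$ with barycentric coordinates $\lambda_1=1-\xi-\eta-\zeta$, $\lambda_2=\zeta$, $\lambda_3=\eta$, $\lambda_4=\xi$ (vertex $v_i$ is where $\lambda_i=1$). The physical element is $T=\mathbf{x}(\Omega)$ with $\mathbf{J}=\mathrm{D}\mathbf{x}$ invertible. Edges are indexed by $\mathcal{J}=\{(1,2),(1,3),(1,4),(2,3),(2,4),(3,4)\}$, faces by $\mathcal{K}=\{(1,2,3),(1,2,4),(1,3,4),(2,3,4)\}$; $\mathcal{J}_k$ is the set of the three edges of face $k$ and $\min\mathcal{J}_k$ its lexicographically smallest element. Scalar polytopal spaces: for each degree $q\ge1$ a basis of $\mathit{P}^q(T)$ is split into vertex functions ($\lambda_1,\dots,\lambda_4$), edge spaces $\mathcal{E}^q_j(T)$ of dimension $q-1$ (functions of degree $2,\dots,q$ associated to edge $j$, vanishing on all other edges), face spaces $\mathcal{F}^q_k(T)$ of dimension $(q-2)(q-1)/2$ (vanishing on all other faces), and a cell space $\mathcal{C}^q(T)$ of dimension $(q-3)(q-2)(q-1)/6$ (vanishing on $\partial T$); the union of these bases is a basis of $\mathit{P}^q(T)$. Edge tangents: reference templates $\boldsymbol{\tau}_{12}=\mathbf{e}_3$, $\boldsymbol{\tau}_{13}=\mathbf{e}_2$, $\boldsymbol{\tau}_{14}=\mathbf{e}_1$, $\boldsymbol{\tau}_{23}=\mathbf{e}_2-\mathbf{e}_3$, $\boldsymbol{\tau}_{24}=\mathbf{e}_1-\mathbf{e}_3$,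 $\boldsymbol{\tau}_{34}=\mathbf{e}_1-\mathbf{e}_2$, mapped by $\mathbf{t}=\mathbf{J}\boldsymbol{\tau}$. Edge-face vectors: reference pairs $(1,2):\{-\mathbf{e}_2,-\mathbf{e}_1\}$, $(1,3):\{\mathbf{e}_3,-\mathbf{e}_1\}$, $(1,4):\{\mathbf{e}_3,\mathbf{e}_2\}$, $(2,3):\{\mathbf{e}_1+\mathbf{e}_2+\mathbf{e}_3,-\mathbf{e}_1\}$, $(2,4):\{\mathbf{e}_1+\mathbf{e}_2+\mathbf{e}_3,\mathbf{e}_2\}$, $(3,4):\{\mathbf{e}_1+\mathbf{e}_2+\mathbf{e}_3,-\mathbf{e}_3\}$, mapped by $\mathbf{k}=\mathbf{J}^{-T}\boldsymbol{\kappa}$. Face normals: reference $\boldsymbol{\nu}_{123}=-\mathbf{e}_1$, $\boldsymbol{\nu}_{124}=\mathbf{e}_2$, $\boldsymbol{\nu}_{134}=-\mathbf{e}_3$, $\boldsymbol{\nu}_{234}=-\mathbf{e}_1-\mathbf{e}_2-\mathbf{e}_3$, mapped by $\mathbf{n}=(\det\mathbf{J})\mathbf{J}^{-T}\boldsymbol{\nu}$. For an edge with tangent $\mathbf{t}=(t_1,t_2,t_3)$, $\mathbf{d}_2=\big(\operatorname{sgn}_*(t_1)|t_3|,\ \operatorname{sgn}_*(t_2)|t_3|,\ -\operatorname{sgn}_*(t_3)|t_1|-\operatorname{sgn}_*(t_3)|t_2|\big)^T$ where $\operatorname{sgn}_*(x)=1$ for $x\ge0$ and $-1$ for $x<0$,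 and $\mathbf{d}_1=\mathbf{d}_2\times\mathbf{t}$. $\mathbb{1}$ is the identity matrix. $[\mathcal{N}_{II}^1(T)]^3$ is the space of $3\times3$ matrix fields with all rows in $[\mathit{P}^1(T)]^3$, i.e. $[\mathit{P}^1(T)]^{3\times3}$. *)

From HB Require Import structures.
From mathcomp Require Import all_boot all_order all_algebra.
Set Implicit Arguments. Unset Strict Implicit. Unset Printing Implicit Defensive.
Import Order.TTheory GRing.Theory Num.Theory.
Local Open Scope ring_scope.

Section Tet.
Variable R : realFieldType.

Definition vec := 'cV[R]_3.
Definition mat := 'M[R]_3.

Definition v3 (x y z : R) : vec :=
  \col_(i < 3) (match (i : nat) with 0 => x | 1 => y | _ => z end).
Definition e1 : vec := v3 1 0 0.
Definition e2 : vec := v3 0 1 0.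
Definition e3 : vec := v3 0 0 1.

Definition cross (u v : vec) : vec :=
  v3 (u 1 0 * v 2 0 - u 2 0 * v 1 0)
     (u 2 0 * v 0 0 - u 0 0 * v 2 0)
     (u 0 0 * v 1 0 - u 1 0 * v 0 0).
Definition normsq (v : vec) : R := \sum_(i < 3) v i 0 ^+ 2.
Definition tensor (u v : vec) : mat := u *m v^T.

Definition sgnst (x : R) : R := if 0 <= x then 1 else -1.

(* ---- combinatorics: vertices 'I_4 (index i stands for vertex i+1),
   edges 'I_6 in lexicographic order (1,2),(1,3),(1,4),(2,3),(2,4),(3,4),
   faces 'I_4 in order (1,2,3),(1,2,4),(1,3,4),(2,3,4). *)
Definition edge_v (j : 'I_6) : 'I_4 * 'I_4 :=
  match (j : nat) with
  | 0 => (inord 0, inord 1) | 1 => (inord 0, inord 2) | 2 => (inord 0, inord 3)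
  | 3 => (inord 1, inord 2) | 4 => (inord 1, inord 3) | _ => (inord 2, inord 3)
  end.
(* the vertex not in face k: (1,2,3)->4, (1,2,4)->3, (1,3,4)->2, (2,3,4)->1 *)
Definition opp_v (k : 'I_4) : 'I_4 := rev_ord k.
Definition edge_in_face (j : 'I_6) (k : 'I_4) : bool :=
  (opp_v k != (edge_v j).1) && (opp_v k != (edge_v j).2).
Definition minJ (k : 'I_4) : 'I_6 :=
  nth ord0 [seq j <- enum 'I_6 | edge_in_face j k] 0.

Definition tau (j : 'I_6) : vec :=
  match (j : nat) with
  | 0 => e3 | 1 => e2 | 2 => e1 | 3 => e2 - e3 | 4 => e1 - e3 | _ => e1 - e2
  end.
Definition kappa (j : 'I_6) : vec * vec :=
  match (j : nat) with
  | 0 => (- e2, - e1) | 1 => (e3, - e1) | 2 => (e3, e2)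
  | 3 => (e1 + e2 + e3, - e1) | 4 => (e1 + e2 + e3, e2)
  | _ => (e1 + e2 + e3, - e3)
  end.
Definition nu (k : 'I_4) : vec :=
  match (k : nat) with
  | 0 => - e1 | 1 => e2 | 2 => - e3 | _ => - e1 - e2 - e3
  end.

(* ---- mapped vectors for the affine map x(xi) = a + J xi *)
Definition JmT (J : mat) : mat := (invmx J)^T.
Definition tvec (J : mat) (j : 'I_6) : vec := J *m tau j.
Definition nvec (J : mat) (k : 'I_4) : vec := \det J *: (JmT J *m nu k).
Definition kvec (J : mat) (k : 'I_4) (j : 'I_6) : vec :=
  let k1 := JmT J *m (kappa j).1 in
  let k2 := JmT J *m (kappa j).2 in
  if cross (nvec J k) k1 != 0 then k1 else k2.
Definition Qmat (J : mat) (k : 'I_4) : mat :=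
  (normsq (nvec J k))%:M - tensor (nvec J k) (nvec J k).
Definition mvec (J : mat) (k : 'I_4) (j : 'I_6) : vec := Qmat J k *m kvec J k j.
Definition d2vec (t : vec) : vec :=
  v3 (sgnst (t 0 0) * `|t 2 0|) (sgnst (t 1 0) * `|t 2 0|)
     (- sgnst (t 2 0) * `|t 0 0| - sgnst (t 2 0) * `|t 1 0|).
Definition d1vec (t : vec) : vec := cross (d2vec t) t.

Definition inOmega (xi : vec) : Prop :=
  [/\ 0 <= xi 0 0, 0 <= xi 1 0, 0 <= xi 2 0 & xi 0 0 + xi 1 0 + xi 2 0 <= 1].
Definition inT (a : vec) (J : mat) (y : vec) : Prop :=
  exists2 xi, inOmega xi & y = a + J *m xi.
(* barycentric coordinates on T, lambda_i o x^{-1} *)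
Definition lam (a : vec) (J : mat) (i : 'I_4) (y : vec) : R :=
  let xi := invmx J *m (y - a) in
  match (i : nat) with
  | 0 => 1 - xi 0 0 - xi 1 0 - xi 2 0 | 1 => xi 2 0 | 2 => xi 1 0 | _ => xi 0 0
  end.
Definition on_edge a J (j : 'I_6) (y : vec) : Prop :=
  inT a J y /\ forall l : 'I_4, l != (edge_v j).1 -> l != (edge_v j).2 -> lam a J l y = 0.
Definition on_face a J (k : 'I_4) (y : vec) : Prop :=
  inT a J y /\ lam a J (opp_v k) y = 0.
Definition on_boundary a J (y : vec) : Prop := exists k, on_face a J k y.

Definition polyfun (q : nat) (f : vec -> R) : Prop :=
  exists c : {ffun 'I_3 -> 'I_q.+1} -> R, forall y,
    f y = \sum_(al : {ffun 'I_3 -> 'I_q.+1} | (\sum_(i < 3) (al i : nat) <= q)%N)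
            c al * \prod_(i < 3) y i 0 ^+ al i.

Definition sindep_on (S : vec -> Prop) (I : finType) (f : I -> vec -> R) : Prop :=
  forall c : I -> R, (forall y, S y -> \sum_i c i * f i y = 0) -> forall i, c i = 0.
Definition mindep_on (S : vec -> Prop) (I : finType) (f : I -> vec -> mat) : Prop :=
  forall c : I -> R, (forall y, S y -> \sum_i c i *: f i y = 0) -> forall i, c i = 0.

Definition sbasis_on (S : vec -> Prop) (q : nat) (I : finType) (f : I -> vec -> R) :=
  [/\ forall i, polyfun q (f i), sindep_on S f &
      forall g, polyfun q g -> exists c : I -> R, forall y, S y -> g y = \sum_i c i * f i y].

Definition dimF (q : nat) : nat := ((q - 2) * (q - 1)) %/ 2.
Definition dimC (q : nat) : nat := ((q - 3) * (q - 2) * (q - 1)) %/ 6.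

Definition allIdx (q : nat) : finType :=
  ('I_4 + ('I_6 * 'I_q.-1) + ('I_4 * 'I_(dimF q)) + 'I_(dimC q))%type.

Definition allbasis a J
  (E : forall q, 'I_6 -> 'I_q.-1 -> vec -> R)
  (F : forall q, 'I_4 -> 'I_(dimF q) -> vec -> R)
  (C : forall q, 'I_(dimC q) -> vec -> R) (q : nat) (x : allIdx q) : vec -> R :=
  match x with
  | inl (inl (inl i)) => lam a J i
  | inl (inl (inr (j, i))) => E q j i
  | inl (inr (k, i)) => F q k i
  | inr i => C q i
  end.

Arguments allbasis : clear implicits.

Definition polytopal_spaces a J
  (E : forall q, 'I_6 -> 'I_q.-1 -> vec -> R)
  (F : forall q, 'I_4 -> 'I_(dimF q) -> vec -> R)
  (C : forall q, 'I_(dimC q) -> vec -> R) : Prop :=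
  forall q : nat, (1 <= q)%N ->
  [/\ forall j i j' y, j' != j -> on_edge a J j' y -> E q j i y = 0,
      forall k i k' y, k' != k -> on_face a J k' y -> F q k i y = 0,
      forall i y, on_boundary a J y -> C q i y = 0 &
      sbasis_on (inT a J) q (allbasis a J E F C q)].

Definition P1mat_basis a J (B : 'I_36 -> vec -> mat) : Prop :=
  [/\ forall i r s, polyfun 1 (fun y => B i y r s), mindep_on (inT a J) B &
      forall G : vec -> mat, (forall r s, polyfun 1 (fun y => G y r s)) ->
        exists c : 'I_36 -> R, forall y, inT a J y -> G y = \sum_i c i *: B i y].

Definition sl3_basis (S : 'I_8 -> mat) : Prop :=
  [/\ forall i, \tr (S i) = 0,
      forall c : 'I_8 -> R, \sum_i c i *: S i = 0 -> forall i, c i = 0 &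
      forall M : mat, \tr M = 0 -> exists c : 'I_8 -> R, M = \sum_i c i *: S i].

Definition EFidx : finType := {kj : 'I_4 * 'I_6 | edge_in_face kj.2 kj.1}.

Definition Idx (p : nat) : finType :=
  ('I_36
   + ('I_6 * 'I_p.-1 * bool)
   + (EFidx * 'I_p.-1 * 'I_3)
   + ('I_4 * 'I_(dimF p) * 'I_5)
   + ('I_6 * 'I_p + 'I_4 * 'I_(dimF p.+1) + 'I_(dimC p.+1))
   + ('I_4 * 'I_(dimF p) * 'I_3)
   + ('I_(dimC p) * 'I_8))%type.

Definition fam (a : vec) J (B : 'I_36 -> vec -> mat) (S : 'I_8 -> mat)
  (E : forall q, 'I_6 -> 'I_q.-1 -> vec -> R)
  (F : forall q, 'I_4 -> 'I_(dimF q) -> vec -> R)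
  (C : forall q, 'I_(dimC q) -> vec -> R) (p : nat) (x : Idx p) (y : vec) : mat :=
  match x with
  | inl (inl (inl (inl (inl (inl i))))) => B i y
  | inl (inl (inl (inl (inl (inr (j, i, b)))))) =>
      let t := tvec J j in
      E p j i y *: tensor (if b then d1vec t else d2vec t) t
  | inl (inl (inl (inl (inr (kj, i, r))))) =>
      let k := (val kj).1 in let j := (val kj).2 in
      let t := tvec J j in let kk := kvec J k j in
      let m := mvec J k j in let n := nvec J k in
      E p j i y *: (match (r : nat) with
                    | 0 => tensor t kk | 1 => tensor m kk | _ => tensor n kk end)
  | inl (inl (inl (inr (k, i, r)))) =>
      let j := minJ k in
      let t := tvec J j in let m := mvec J k j in let n := nvec J k in
      F p k i y *: (match (r : nat) with
                    | 0 => tensor t m | 1 => tensor m t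
                    | 2 => tensor t t - tensor m m
                    | 3 => tensor n t | _ => tensor n m end)
  | inl (inl (inr (inl (inl (j, i))))) => E p.+1 j i y *: 1%:M
  | inl (inl (inr (inl (inr (k, i))))) => F p.+1 k i y *: 1%:M
  | inl (inl (inr (inr i))) => C p.+1 i y *: 1%:M
  | inl (inr (k, i, r)) =>
      let j := minJ k in
      let t := tvec J j in let m := mvec J k j in let n := nvec J k in
      F p k i y *: (match (r : nat) with
                    | 0 => tensor t n | 1 => tensor m n | _ => tensor n n end)
  | inr (i, s) => C p i y *: S s
  end.

End Tet.
Arguments allbasis : clear implicits.
Arguments fam : clear implicits.

(* A vanishing combination of the family can be rewritten as
   sum_h phi_h M_h + psi 1, where phi_h runs through the degree-p scalar basis
   (vertex, edge, face and cell functions), the M_h are constant matrices and psi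
   is a combination of the degree-(p+1) edge, face and cell functions; the
   [P^1]^{3x3} part only contributes to the vertex matrices. Comparing entries and
   using the independence of the phi_h shows that every M_h is a multiple of the
   identity. For an edge, a face or the cell, the tensors making up M_h are
   independent modulo the identity: the frames (d1, d2, t) and (t, m, n) are
   orthogonal, the two faces through an edge use different edge-face vectors, and
   sl(3) is trace free. Hence those coefficients vanish, and the (0,0) entry becomes
   a combination of degree-(p+1) basis functions (the vertex functions are the same
   barycentric coordinates in every degree), so all remaining coefficients vanish
   too; the independence of the [P^1]^{3x3} basis finishes the proof. *)

From HB Require Import structures.
From mathcomp Require Import all_boot all_order all_algebra.
From mathcomp Require Import ring lra.
Import Order.TTheory GRing.Theory Num.Theory.
Local Open Scope ring_scope.
Set Implicit Arguments. Unset Strict Implicit.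

Lemma big_ord3 (V : nmodType) (f : 'I_3 -> V) : \sum_i f i = f 0 + f 1 + f 2.
Proof. by rewrite !big_ord_recr big_ord0 /= add0r; congr (f _ + f _ + f _); apply: val_inj. Qed.

Lemma big_ord5 (V : nmodType) (f : 'I_5 -> V) : \sum_i f i = f 0 + f 1 + f 2 + f 3 + f 4.
Proof.
rewrite !big_ord_recr big_ord0 /= add0r.
by congr (f _ + f _ + f _ + f _ + f _); apply: val_inj.
Qed.

Lemma ord3P (i : 'I_3) : [\/ i = 0, i = 1 | i = 2].
Proof. by case: i => -[|[|[|//]]] ?; [constructor 1|constructor 2|constructor 3]; apply: val_inj. Qed.

Lemma forall_ord5 (P : 'I_5 -> Prop) : P 0 -> P 1 -> P 2 -> P 3 -> P 4 -> forall r, P r.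
Proof.
move=> P0 P1 P2 P3 P4 [[|[|[|[|[|//]]]]] Hr];
  [move: P0 | move: P1 | move: P2 | move: P3 | move: P4]; congr P; exact: val_inj.
Qed.

Lemma sum_pair (V : nmodType) (I K : finType) (F : I * K -> V) :
  \sum_x F x = \sum_i \sum_k F (i, k).
Proof. by rewrite pair_bigA; apply: eq_bigr => -[]. Qed.

Lemma sum_sumType (V : nmodType) (I K : finType) (F : I + K -> V) :
  \sum_x F x = \sum_i F (inl i) + \sum_k F (inr k).
Proof. exact: big_sumType. Qed.

Lemma mulr_eq0_gt0 (R : numDomainType) (x a : R) : 0 < a -> x * a = 0 -> x = 0.
Proof. by move=> a0 /eqP; rewrite mulf_eq0 (gt_eqF a0) orbF => /eqP. Qed.

Section Vectors.
Variable R : realFieldType.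
Implicit Types (u v w x : vec R) (M : mat R).

Lemma col3P u v : u 0 0 = v 0 0 -> u 1 0 = v 1 0 -> u 2 0 = v 2 0 -> u = v.
Proof.
move=> h0 h1 h2; apply/matrixP => i j; rewrite [j]ord1.
by case: (ord3P i) => ->.
Qed.

Lemma v3_eq0 (x y z : R) : (v3 x y z == 0) = [&& x == 0, y == 0 & z == 0].
Proof.
apply/eqP/and3P => [h|[/eqP hx /eqP hy /eqP hz]]; last by apply: col3P; rewrite !mxE.
by split; apply/eqP; [have := congr1 (fun u => u 0 0) h | have := congr1 (fun u => u 1 0) h
  | have := congr1 (fun u => u 2 0) h]; rewrite !mxE.
Qed.

Definition dot u v : R := \sum_i u i 0 * v i 0.

Ltac coords := rewrite /dot /cross ?big_ord3 ?mxE /=; ring.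

Lemma dotC u v : dot u v = dot v u. Proof. by coords. Qed.
Lemma dotDl u v w : dot (u + v) w = dot u w + dot v w. Proof. by coords. Qed.
Lemma dotDr u v w : dot u (v + w) = dot u v + dot u w. Proof. by coords. Qed.
Lemma dotBl u v w : dot (u - v) w = dot u w - dot v w. Proof. by coords. Qed.
Lemma dotNr u v : dot u (- v) = - dot u v. Proof. by coords. Qed.
Lemma dotZl (s : R) u v : dot (s *: u) v = s * dot u v. Proof. by coords. Qed.
Lemma dotZr (s : R) u v : dot u (s *: v) = s * dot u v. Proof. by coords. Qed.
Lemma dot0l u : dot 0 u = 0. Proof. by coords. Qed.
Lemma dot0r u : dot u 0 = 0. Proof. by coords. Qed.

Lemma dot_gt0 u : u != 0 -> 0 < dot u u.
Proof.
apply: contraNT; rewrite -leNgt /dot big_ord3 => h.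
have h0 : u 0 0 = 0 by nra.
have h1 : u 1 0 = 0 by nra.
have h2 : u 2 0 = 0 by nra.
by apply/eqP; apply: col3P; rewrite mxE.
Qed.

Lemma dot_neq0 u : u != 0 -> dot u u != 0.
Proof. by move/dot_gt0/gt_eqF ->. Qed.

Lemma tensor_mulmx u v w : tensor u v *m w = dot v w *: u.
Proof.
apply/matrixP => i j; rewrite [j]ord1 /tensor -mulmxA !mxE big_ord1 mxE mulrC.
by congr (_ * _); apply: eq_bigr => k _; rewrite mxE.
Qed.

Lemma cross0l u : cross 0 u = 0. Proof. by apply: col3P; coords. Qed.
Lemma cross0r u : cross u 0 = 0. Proof. by apply: col3P; coords. Qed.
Lemma crossZl (s : R) u v : cross (s *: u) v = s *: cross u v.
Proof. by apply: col3P; coords. Qed.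
Lemma cross_subZr (s s' : R) u v : cross u (s *: v - s' *: u) = s *: cross u v.
Proof. by apply: col3P; coords. Qed.
Lemma dot_crossl u v : dot (cross u v) u = 0. Proof. by coords. Qed.
Lemma dot_crossr u v : dot (cross u v) v = 0. Proof. by coords. Qed.
Lemma dot_cross u v : dot (cross u v) (cross u v) = dot u u * dot v v - dot u v ^+ 2.
Proof. by coords. Qed.

Definition triple u v w := dot (cross u v) w.

Lemma triple_mulmx M u v w :
  triple (M *m u) (M *m v) (M *m w) =
  triple (M *m e1 R) (M *m e2 R) (M *m e3 R) * triple u v w.
Proof. by rewrite /triple /dot /cross /e1 /e2 /e3 !big_ord3 !mxE !big_ord3 !mxE /=; ring. Qed.

Lemma triple_e : triple (e1 R) (e2 R) (e3 R) = 1.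
Proof. by rewrite /triple /e1 /e2 /e3; coords. Qed.

Lemma cross_eq0 u v : (forall w, triple u v w = 0) -> cross u v = 0.
Proof.
move=> h; apply: col3P; rewrite [RHS]mxE.
- by rewrite -(h (e1 R)) /triple /e1; coords.
- by rewrite -(h (e2 R)) /triple /e2; coords.
- by rewrite -(h (e3 R)) /triple /e3; coords.
Qed.

Lemma cross_mulmx_eq0 M u v : M \in unitmx ->
  (cross (M *m u) (M *m v) == 0) = (cross u v == 0).
Proof.
move=> hM; have hdet : triple (M *m e1 R) (M *m e2 R) (M *m e3 R) != 0.
  apply: contra_eq_neq (triple_mulmx M (invmx M *m e1 R) (invmx M *m e2 R) (invmx M *m e3 R)).
  by rewrite !mulmxA mulmxV // !mul1mx triple_e => ->; rewrite mul0r oner_neq0.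
apply/eqP/eqP => h; apply: cross_eq0 => w.
  apply/eqP; rewrite -(mulrI_eq0 _ (lregP hdet)) -triple_mulmx.
  by rewrite /triple h dot0l.
by rewrite -[w](mul1mx) -(mulmxV hM) -mulmxA triple_mulmx /triple h dot0l mulr0.
Qed.

Lemma orthogonal3_indep u v w (x y z : R) :
  u != 0 -> v != 0 -> w != 0 -> dot u v = 0 -> dot u w = 0 -> dot v w = 0 ->
  x *: u + y *: v + z *: w = 0 -> [/\ x = 0, y = 0 & z = 0].
Proof.
move=> hu hv hw huv huw hvw h.
have := congr1 (dot^~ u) h; have := congr1 (dot^~ v) h; have := congr1 (dot^~ w) h.
rewrite /= !dotDl !dotZl !dot0l (dotC v u) (dotC w u) (dotC w v) huv huw hvw !mulr0.
rewrite !(addr0, add0r) => /eqP; rewrite mulf_eq0 (negbTE (dot_neq0 hw)) orbF => /eqP ->.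
move=> /eqP; rewrite mulf_eq0 (negbTE (dot_neq0 hv)) orbF => /eqP ->.
by move=> /eqP; rewrite mulf_eq0 (negbTE (dot_neq0 hu)) orbF => /eqP ->.
Qed.

End Vectors.

Section EdgeFrame.
Variable R : realFieldType.
Implicit Types t : vec R.

Lemma sgnst_mulr (x : R) : sgnst x * x = `|x|.
Proof.
rewrite /sgnst; case: ifP => h; first by rewrite mul1r ger0_norm.
by rewrite mulN1r ltr0_norm // ltNge h.
Qed.

Lemma sgnst_neq0 (x : R) : sgnst x != 0.
Proof. by rewrite /sgnst; case: ifP => _; rewrite ?oppr_eq0 oner_eq0. Qed.

Lemma dot_d2vec t : dot (d2vec t) t = 0.
Proof.
rewrite /dot big_ord3 /d2vec !mxE /=.
transitivity (`|t 2 0| * (sgnst (t 0 0) * t 0 0) + `|t 2 0| * (sgnst (t 1 0) * t 1 0)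
   - (sgnst (t 2 0) * t 2 0) * (`|t 0 0| + `|t 1 0|)); first ring.
by rewrite !sgnst_mulr; ring.
Qed.

Lemma dot_d1vec t : dot (d1vec t) t = 0.
Proof. exact: dot_crossr. Qed.

Lemma dot_d1vec_d2vec t : dot (d1vec t) (d2vec t) = 0.
Proof. exact: dot_crossl. Qed.

Lemma d2vec_neq0 t : t != 0 -> d2vec t != 0.
Proof.
apply: contraNneq => h.
have := congr1 (fun u : vec R => u 0 0) h; have := congr1 (fun u : vec R => u 2 0) h.
rewrite /d2vec !mxE /= => /eqP h2 /eqP; rewrite mulf_eq0 (negbTE (sgnst_neq0 _)) normr_eq0 /=.
move=> /eqP t2; move: h2; rewrite t2 /sgnst lexx !mulN1r -opprD oppr_eq0 => /eqP hs.
have n0 := normr_ge0 (t 0 0); have n1 := normr_ge0 (t 1 0).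
have /eqP : `|t 0 0| = 0 by lra.
have /eqP : `|t 1 0| = 0 by lra.
by rewrite !normr_eq0 => /eqP t1 /eqP t0; apply/eqP/col3P; rewrite mxE.
Qed.

Lemma d1vec_neq0 t : t != 0 -> d1vec t != 0.
Proof.
move=> ht; apply/eqP => h; have := dot_cross (d2vec t) t.
rewrite -/(d1vec t) h dot0l dot_d2vec expr0n /= subr0 => /esym/eqP.
by rewrite mulf_eq0 !(negbTE (dot_neq0 _)) ?d2vec_neq0.
Qed.

End EdgeFrame.

Section Reference.
Variable R : realFieldType.

Definition ref_kvec (k : 'I_4) (j : 'I_6) : vec R :=
  if cross (nu R k) (kappa R j).1 != 0 then (kappa R j).1 else (kappa R j).2.

(* Pairs nontrivially with the edge-face vector chosen by face [k] at edge [j] and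
   annihilates the one chosen by the other face through [j]. *)
Definition face_sep (k : 'I_4) (j : 'I_6) : vec R :=
  match (k : nat), (j : nat) with
  | 0, 0 => e2 R | 1, 0 => e1 R | 0, 1 => e3 R | 2, 1 => e1 R
  | 1, 2 => e3 R | 2, 2 => e2 R | 0, 3 => e2 R | 3, 3 => v3 1 (-1) 0
  | 1, 4 => e1 R | 3, 4 => v3 1 (-1) 0 | 2, 5 => e1 R | _, _ => v3 1 0 (-1)
  end%N.

Ltac ref_simpl := do 2 (rewrite /dot /cross ?big_ord3 /e1 /e2 /e3 ?v3_eq0 ?mxE /=;
  rewrite ?(mul0r, mulr0, mul1r, mulr1, mulN1r, mulrN1, subr0, sub0r, add0r, addr0,
            opprK, oppr0, eqxx, oppr_eq0, oner_eq0, addNr, addrN, subrr) /=).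

Ltac case_edge_face k j :=
  case: k => -[|[|[|[|//]]]] ?; case: j => -[|[|[|[|[|[|//]]]]]] ?;
  rewrite /edge_in_face /opp_v /edge_v /= -!val_eqE /= !inordK //=.

Lemma tau_neq0 j : tau R j != 0.
Proof.
apply/eqP => /(congr1 (dot (tau R j))); rewrite dot0r.
by case: j => -[|[|[|[|[|[|//]]]]]] ?; ref_simpl; lra.
Qed.

Lemma dot_tau_kappa j : dot (tau R j) (kappa R j).1 = 0 /\ dot (tau R j) (kappa R j).2 = 0.
Proof. by case: j => -[|[|[|[|[|[|//]]]]]] ?; split; ref_simpl. Qed.

Lemma dot_tau_ref_kvec k j : dot (tau R j) (ref_kvec k j) = 0.
Proof. by rewrite /ref_kvec; case: ifP => _; case: (dot_tau_kappa j). Qed.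

Lemma dot_nu_tau k j : edge_in_face j k -> dot (nu R k) (tau R j) = 0.
Proof. by case_edge_face k j => _; ref_simpl. Qed.

Lemma cross_nu_ref_kvec k j : edge_in_face j k -> cross (nu R k) (ref_kvec k j) != 0.
Proof. by rewrite /ref_kvec /cross !v3_eq0; case_edge_face k j => _; ref_simpl. Qed.

Lemma face_sepP k j : edge_in_face j k ->
  dot (ref_kvec k j) (face_sep k j) != 0 /\
  forall k', edge_in_face j k' -> k' != k -> dot (ref_kvec k' j) (face_sep k j) = 0.
Proof.
move=> hkj; split.
  by move: hkj; rewrite /ref_kvec /cross !v3_eq0; case_edge_face k j => _; ref_simpl.
move=> k'; move: hkj; rewrite /ref_kvec /cross !v3_eq0; case_edge_face k j => _; case: k' => -[|[|[|[|//]]]] ?;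
  rewrite /edge_in_face /opp_v /edge_v /= -?val_eqE /= ?inordK //= => _ _;
  by rewrite /face_sep; ref_simpl.
Qed.

Lemma minJ_in (k : 'I_4) : edge_in_face (minJ k) k.
Proof.
have : has (edge_in_face^~ k) (enum 'I_6).
  apply/hasP; case: k => -[|[|[|[|//]]]] Hk;
    [exists (inord 0) | exists (inord 0) | exists (inord 1) | exists (inord 3)];
    rewrite ?mem_enum // /edge_in_face /opp_v /edge_v /= -!val_eqE /= !inordK //.
by rewrite has_filter /minJ -size_eq0 -lt0n => /(mem_nth ord0); rewrite mem_filter => /andP[].
Qed.

End Reference.

Section Mapped.
Variables (R : realFieldType) (J : mat R).
Hypothesis HJ : J \in unitmx.
Implicit Types u v : vec R.

Lemma JmT_unit : JmT J \in unitmx.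
Proof. by rewrite /JmT unitmx_tr unitmx_inv. Qed.

Lemma dot_JmT_mulmx u v : dot (JmT J *m u) (J *m v) = dot u v.
Proof.
have dotE (x y : vec R) : dot x y = (x^T *m y) 0 0.
  by rewrite /dot mxE; apply: eq_bigr => i _; rewrite mxE.
by rewrite !dotE /JmT !trmx_mul trmxK mulmxA -(mulmxA _ (invmx J)) mulVmx // mulmx1.
Qed.

Lemma kvecE k j : kvec J k j = JmT J *m ref_kvec R k j.
Proof.
have detJ : \det J != 0 by rewrite -unitfE -unitmxE.
rewrite /kvec /nvec /ref_kvec crossZl scaler_eq0 (negbTE detJ) /=.
by rewrite cross_mulmx_eq0 ?JmT_unit //; case: ifP.
Qed.

Lemma dot_kvec_tvec k j : dot (kvec J k j) (tvec J j) = 0.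
Proof. by rewrite kvecE dot_JmT_mulmx dotC dot_tau_ref_kvec. Qed.

Lemma dot_nvec_tvec k j : edge_in_face j k -> dot (nvec J k) (tvec J j) = 0.
Proof. by move=> hkj; rewrite /nvec dotZl dot_JmT_mulmx dot_nu_tau // mulr0. Qed.

Lemma tvec_neq0 j : tvec J j != 0.
Proof.
apply: contra_neq (tau_neq0 R j) => h.
by rewrite -[tau R j]mul1mx -(mulVmx HJ) -mulmxA -/(tvec J j) h mulmx0.
Qed.

Lemma cross_nvec_kvec k j : edge_in_face j k -> cross (nvec J k) (kvec J k j) != 0.
Proof.
move=> hkj; have detJ : \det J != 0 by rewrite -unitfE -unitmxE.
rewrite /nvec kvecE crossZl scaler_eq0 (negbTE detJ) /=.
by rewrite cross_mulmx_eq0 ?JmT_unit ?cross_nu_ref_kvec.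
Qed.

Lemma mvecE k j :
  mvec J k j = dot (nvec J k) (nvec J k) *: kvec J k j - dot (nvec J k) (kvec J k j) *: nvec J k.
Proof. by rewrite /mvec /Qmat mulmxBl tensor_mulmx mul_scalar_mx. Qed.

Lemma face_frame k j : edge_in_face j k ->
  [/\ tvec J j != 0, mvec J k j != 0 & nvec J k != 0] /\
  [/\ dot (tvec J j) (mvec J k j) = 0, dot (tvec J j) (nvec J k) = 0 &
      dot (mvec J k j) (nvec J k) = 0].
Proof.
move=> hkj; have hc := cross_nvec_kvec hkj.
have htn := dot_nvec_tvec hkj; have hkt := dot_kvec_tvec k j.
rewrite mvecE (dotC (tvec J j) (nvec J k)) htn (dotC (tvec J j)) tvec_neq0.
move: (nvec J k) (kvec J k j) hc htn hkt => n kk hc htn hkt.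
have hn : n != 0 by apply: contraNneq hc => ->; rewrite cross0l.
split; split => //.
- apply: contraNneq hc => /(congr1 (cross n)).
  by rewrite cross_subZr cross0r => /eqP; rewrite scaler_eq0 (negbTE (dot_neq0 hn)).
- by rewrite dotBl !dotZl htn hkt !mulr0 subrr.
- by rewrite dotBl !dotZl (dotC kk) mulrC subrr.
Qed.

End Mapped.

Section FaceBlock.
Variable R : realFieldType.
Variables t m n : vec R.
Hypotheses (ht : t != 0) (hm : m != 0) (hn : n != 0).
Hypotheses (htm : dot t m = 0) (htn : dot t n = 0) (hmn : dot m n = 0).

Definition face_mat (r : 'I_5) : mat R :=
  match (r : nat) with
  | 0 => tensor t m | 1 => tensor m t
  | 2 => tensor t t - tensor m m
  | 3 => tensor n t | _ => tensor n m end.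

Definition face_normal_mat (r : 'I_3) : mat R :=
  match (r : nat) with 0 => tensor t n | 1 => tensor m n | _ => tensor n n end.

Lemma face_block_eq0 (g : 'I_5 -> R) (d : 'I_3 -> R) (mu : R) :
  \sum_r g r *: face_mat r + \sum_r d r *: face_normal_mat r = mu *: 1%:M ->
  (forall r, g r = 0) /\ (forall r, d r = 0).
Proof.
rewrite big_ord5 big_ord3 /face_mat /face_normal_mat /= => H.
(* Pair both sides with frame vectors: the identity is only seen by (t,t), (m,m)
   and (n,n), where t (x) t - m (x) m takes opposite signs. *)
have hmt : dot m t = 0 by rewrite dotC.
have hnt : dot n t = 0 by rewrite dotC.
have hnm : dot n m = 0 by rewrite dotC.
have T0 := dot_gt0 ht; have M0 := dot_gt0 hm; have N0 := dot_gt0 hn.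
have E u w := congr1 (fun Z => dot u (Z *m w)) H.
move: (E t m) (E m t) (E t t) (E m m) (E n t) (E n m) (E t n) (E m n) (E n n) => {E H} /=.
rewrite -!scalemxAl !mul1mx !mulmxDl -!scalemxAl !mulmxBl !tensor_mulmx !(dotZr, dotDr, dotNr).
rewrite htm htn hmn hmt hnt hnm !(mulr0, mul0r, addr0, add0r, subr0, sub0r, oppr0).
move=> etm emt ett emm ent enm etn emn enn.
set T := dot t t in T0 etm emt ett ent etn; set M := dot m m in M0 etm emt emm enm emn.
set N := dot n n in N0 ent enm etn emn enn.
have g2 : g 2 = 0.
  apply: (mulr_eq0_gt0 (a := T * M * (T + M))); first by rewrite !mulr_gt0 ?addr_gt0.
  transitivity ((g 2 * (T * T)) * M - (g 2 * - (M * M)) * T); first ring.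
  by rewrite ett emm; ring.
have mu0 : mu = 0 by apply: (mulr_eq0_gt0 T0); rewrite -ett g2 mul0r.
rewrite mu0 mul0r in enn.
split; [apply: forall_ord5 => // | move=> r; case: (ord3P r) => ->];
  by apply: mulr_eq0_gt0; last eassumption; rewrite mulr_gt0.
Qed.

End FaceBlock.

Section EdgeBlock.
Variables (R : realFieldType) (J : mat R).
Hypothesis HJ : J \in unitmx.

Definition edge_mat (j : 'I_6) (b : bool) : mat R :=
  let t := tvec J j in tensor (if b then d1vec t else d2vec t) t.

Definition edge_face_vec (kj : EFidx) (r : 'I_3) : vec R :=
  match (r : nat) with
  | 0 => tvec J (val kj).2 | 1 => mvec J (val kj).1 (val kj).2 | _ => nvec J (val kj).1 end.

Definition edge_face_mat (kj : EFidx) (r : 'I_3) : mat R :=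
  let k := (val kj).1 in let j := (val kj).2 in
  let t := tvec J j in let kk := kvec J k j in
  let m := mvec J k j in let n := nvec J k in
  match (r : nat) with 0 => tensor t kk | 1 => tensor m kk | _ => tensor n kk end.

Lemma edge_face_matE kj r :
  edge_face_mat kj r = tensor (edge_face_vec kj r) (kvec J (val kj).1 (val kj).2).
Proof. by case: r => -[|[|?]] ?. Qed.

Lemma edge_in_face_EFidx (kj : EFidx) : edge_in_face (val kj).2 (val kj).1.
Proof. exact: valP kj. Qed.

Lemma kvec_tensor_eq0 j (w : EFidx -> vec R) :
  \sum_(kj : EFidx | (val kj).2 == j) tensor (w kj) (kvec J (val kj).1 (val kj).2) = 0 ->
  forall kj, (val kj).2 = j -> w kj = 0.
Proof.
move=> H kj0 hj0; have hin0 := edge_in_face_EFidx kj0; rewrite hj0 in hin0.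
have [sep_ne sep_eq0] := face_sepP R hin0.
move: H => /(congr1 (mulmx^~ (J *m face_sep R (val kj0).1 j))).
rewrite mul0mx mulmx_suml (bigD1 kj0) ?hj0 //= big1 ?addr0 => [|kj /andP[/eqP hj ne_kj]].
  rewrite tensor_mulmx (kvecE HJ) (dot_JmT_mulmx HJ) => /eqP.
  by rewrite scaler_eq0 (negbTE sep_ne) => /eqP.
have hin := edge_in_face_EFidx kj; rewrite hj in hin.
rewrite tensor_mulmx (kvecE HJ) (dot_JmT_mulmx HJ) hj sep_eq0 ?scale0r //.
apply: contra_neq ne_kj => hk; apply/val_inj/injective_projections => //.
by rewrite hj hj0.
Qed.

Lemma edge_block_eq0 j (al : bool -> R) (be : EFidx -> 'I_3 -> R) (mu : R) :
  \sum_b al b *: edge_mat j b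
  + \sum_(kj : EFidx | (val kj).2 == j) \sum_r be kj r *: edge_face_mat kj r = mu *: 1%:M ->
  (forall b, al b = 0) /\ (forall kj, (val kj).2 = j -> forall r, be kj r = 0).
Proof.
pose w kj := \sum_r be kj r *: edge_face_vec kj r.
have wE kj : \sum_r be kj r *: edge_face_mat kj r = tensor (w kj) (kvec J (val kj).1 (val kj).2).
  by rewrite /tensor mulmx_suml; apply: eq_bigr => r _; rewrite edge_face_matE scalemxAl.
rewrite (eq_bigr _ (fun kj _ => wE kj)) big_bool /edge_mat /= => H.
set t := tvec J j in H; have ht : t != 0 := tvec_neq0 HJ j.
have [al0 mu0] : (forall b, al b = 0) /\ mu = 0.
  move: H => /(congr1 (mulmx^~ t)).
  rewrite mulmxDl mulmx_suml big1 => [|kj /eqP hj]; last first.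
    by rewrite tensor_mulmx /t -hj (dot_kvec_tvec HJ) scale0r.
  rewrite addr0 mulmxDl -!scalemxAl !tensor_mulmx mul1mx => /eqP.
  rewrite -subr_eq0 !scalerA -scaleNr => /eqP /(orthogonal3_indep (d1vec_neq0 ht)
    (d2vec_neq0 ht) ht (dot_d1vec_d2vec t) (dot_d1vec t) (dot_d2vec t)).
  case=> a1 a2 /eqP; rewrite oppr_eq0 => /eqP mu0; split=> //.
  by case; apply: (mulr_eq0_gt0 (dot_gt0 ht)).
split=> // kj hj r.
move: H; rewrite !al0 !scale0r !add0r mu0 scale0r => /kvec_tensor_eq0 /(_ kj hj).
have [[ht' hm hn] [htm htn hmn]] := face_frame HJ (edge_in_face_EFidx kj).
rewrite /w big_ord3 /edge_face_vec /= => /(orthogonal3_indep ht' hm hn htm htn hmn).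
by case=> b0 b1 b2; case: (ord3P r) => ->.
Qed.

End EdgeBlock.

Section ScalarBases.
Variable R : realFieldType.

Lemma polyfun_comb_mx (q : nat) (I : finType) (M : I -> vec R -> mat R) (w : I -> R) :
  (forall i r s, polyfun q (fun y => M i y r s)) ->
  forall r s, polyfun q (fun y => (\sum_i w i *: M i y) r s).
Proof.
move=> hM r s; have /fin_all_exists[d hd] := fun i => hM i r s.
exists (fun al => \sum_i w i * d i al) => y.
rewrite summxE; under eq_bigr => i _ do rewrite mxE hd mulr_sumr.
rewrite exchange_big /=; apply: eq_bigr => al _.
by rewrite mulr_suml; apply: eq_bigr => i _; rewrite mulrA.
Qed.

Lemma indep_scalar_coefs (D : vec R -> Prop) (I : finType) (f : I -> vec R -> R)
  (M : I -> mat R) (psi : vec R -> R) :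
  sindep_on D f -> (forall y, D y -> \sum_i f i y *: M i + psi y *: 1%:M = 0) ->
  forall i, M i = M i 0 0 *: 1%:M.
Proof.
move=> hind h i; apply/matrixP => r s.
(* Subtracting (r == s) times the (0,0) entry eliminates psi. *)
have entry (r' s' : 'I_3) y : D y -> \sum_i M i r' s' * f i y = - (psi y * (r' == s')%:R).
  move=> Dy; have := congr1 (fun Z : mat R => Z r' s') (h y Dy).
  rewrite !mxE summxE => /eqP; rewrite addr_eq0 => /eqP <-.
  by apply: eq_bigr => j _; rewrite mxE mulrC.
suff /hind/(_ i)/eqP : forall y, D y -> \sum_i (M i r s - (r == s)%:R * M i 0 0) * f i y = 0.
  by rewrite !mxE subr_eq0 mulrC => /eqP.
move=> y Dy; under eq_bigr => j _ do rewrite mulrBl -mulrA.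
by rewrite sumrB -mulr_sumr !entry // eqxx mulr1 mulrN opprK mulrC addrC subrr.
Qed.

Lemma P1_mat_lam a J E F C (G : vec R -> mat R) :
  polytopal_spaces a J E F C -> (forall r s, polyfun 1 (fun y => G y r s)) ->
  exists A : 'I_4 -> mat R, forall y, inT a J y -> G y = \sum_v lam a J v y *: A v.
Proof.
move=> /(_ 1%N isT) [_ _ _ [_ _ span1]] hG.
have /fin_all_exists[w hw] : forall rs : 'I_3 * 'I_3, exists w : allIdx 1 -> R,
    forall y, inT a J y -> G y rs.1 rs.2 = \sum_h w h * allbasis R a J E F C 1 h y.
  by move=> rs; apply: span1.
exists (fun v => \matrix_(r, s) w (r, s) (inl (inl (inl v)))) => y Ty.
apply/matrixP => r s; rewrite (hw (r, s) y Ty) summxE !big_sumType /=.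
rewrite [X in _ + X + _ + _]big1 => [|[? []] //].
rewrite [X in _ + X + _]big1 => [|[? []] //].
rewrite [X in _ + X]big1 => [|[] //].
by rewrite !addr0; apply: eq_bigr => v _; rewrite !mxE mulrC.
Qed.

End ScalarBases.

Section Regroup.
Variables (R : realFieldType) (p : nat) (a : vec R) (J : mat R)
  (E : forall q, 'I_6 -> 'I_q.-1 -> vec R -> R)
  (F : forall q, 'I_4 -> 'I_(dimF q) -> vec R -> R)
  (C : forall q, 'I_(dimC q) -> vec R -> R)
  (B : 'I_36 -> vec R -> mat R) (S : 'I_8 -> mat R) (c : Idx p -> R).

Local Notation phi q := (allbasis R a J E F C q).
Local Notation Phi := (fam R a J B S E F C p).

Definition coef_P1 i := c (inl (inl (inl (inl (inl (inl i)))))).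
Definition coef_edge j i b := c (inl (inl (inl (inl (inl (inr (j, i, b))))))).
Definition coef_edge_face kj i r := c (inl (inl (inl (inl (inr (kj, i, r)))))).
Definition coef_face k i r := c (inl (inl (inl (inr (k, i, r))))).
Definition coef_face_normal k i r := c (inl (inr (k, i, r))).
Definition coef_cell i s := c (inr (i, s)).
Definition coef_id (h : allIdx p.+1) : R :=
  match h with
  | inl (inl (inl _)) => 0
  | inl (inl (inr (j, i))) => c (inl (inl (inr (inl (inl (j, i))))))
  | inl (inr (k, i)) => c (inl (inl (inr (inl (inr (k, i))))))
  | inr i => c (inl (inl (inr (inr i))))
  end.

Definition edge_coefmat j i : mat R :=
  \sum_b coef_edge j i b *: edge_mat J j b
  + \sum_(kj : EFidx | (val kj).2 == j) \sum_r coef_edge_face kj i r *: edge_face_mat J kj r.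

Definition face_coefmat k i : mat R :=
  let t := tvec J (minJ k) in let m := mvec J k (minJ k) in let n := nvec J k in
  \sum_r coef_face k i r *: face_mat t m n r
  + \sum_r coef_face_normal k i r *: face_normal_mat t m n r.

Definition cell_coefmat i : mat R := \sum_s coef_cell i s *: S s.

Variable A : 'I_4 -> mat R.

(* The constant matrix multiplying the degree-p basis function [h] once the family
   is regrouped; the vertex matrices [A] come from expanding the [P^1] part. *)
Definition coefmat (h : allIdx p) : mat R :=
  match h with
  | inl (inl (inl v)) => A v
  | inl (inl (inr (j, i))) => edge_coefmat j i
  | inl (inr (k, i)) => face_coefmat k i
  | inr i => cell_coefmat i
  end.

Definition id_part y := \sum_h coef_id h * phi p.+1 h y.

Variable y : vec R.

Lemma edge_part :
  \sum_x phi p (inl (inl (inr x))) y *: coefmat (inl (inl (inr x))) =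
  \sum_x c (inl (inl (inl (inl (inl (inr x)))))) *: Phi (inl (inl (inl (inl (inl (inr x)))))) y
  + \sum_x c (inl (inl (inl (inl (inr x))))) *: Phi (inl (inl (inl (inl (inr x))))) y.
Proof.
rewrite !sum_pair /=.
rewrite [X in _ = _ + X](partition_big (fun kj : EFidx => (val kj).2) xpredT) //=.
rewrite -big_split /=; apply: eq_bigr => j _.
rewrite [X in _ = _ + X]exchange_big -big_split /=; apply: eq_bigr => i _.
rewrite scalerDr !scaler_sumr; congr (_ + _).
  by apply: eq_bigr => b _; rewrite scalerA mulrC -scalerA.
apply: eq_bigr => kj /eqP hj; rewrite scaler_sumr; apply: eq_bigr => r _.
by rewrite scalerA mulrC -scalerA -hj.
Qed.

Lemma face_part :
  \sum_x phi p (inl (inr x)) y *: coefmat (inl (inr x)) =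
  \sum_x c (inl (inl (inl (inr x)))) *: Phi (inl (inl (inl (inr x)))) y
  + \sum_x c (inl (inr x)) *: Phi (inl (inr x)) y.
Proof.
rewrite !sum_pair -big_split /=; apply: eq_bigr => k _.
rewrite -big_split /=; apply: eq_bigr => i _.
rewrite scalerDr !scaler_sumr.
by congr (_ + _); apply: eq_bigr => r _; rewrite scalerA mulrC -scalerA.
Qed.

Lemma cell_part :
  \sum_x phi p (inr x) y *: coefmat (inr x) = \sum_x c (inr x) *: Phi (inr x) y.
Proof.
rewrite sum_pair; apply: eq_bigr => i _; rewrite scaler_sumr.
by apply: eq_bigr => s _; rewrite scalerA mulrC -scalerA.
Qed.

Lemma id_part_mat :
  id_part y *: 1%:M =
  \sum_x c (inl (inl (inr (inl (inl x))))) *: Phi (inl (inl (inr (inl (inl x))))) y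
  + \sum_x c (inl (inl (inr (inl (inr x))))) *: Phi (inl (inl (inr (inl (inr x))))) y
  + \sum_x c (inl (inl (inr (inr x)))) *: Phi (inl (inl (inr (inr x)))) y.
Proof.
rewrite /id_part scaler_suml !sum_sumType /= big1 => [|v _]; last by rewrite mul0r scale0r.
rewrite add0r !sum_pair /=.
by congr (_ + _ + _); do ?[apply: eq_bigr => ? _]; rewrite scalerA.
Qed.

Hypothesis HA : \sum_i coef_P1 i *: B i y = \sum_v lam a J v y *: A v.

Lemma fam_regroup :
  \sum_x c x *: Phi x y = \sum_h phi p h y *: coefmat h + id_part y *: 1%:M.
Proof.
rewrite !sum_sumType -id_part_mat edge_part face_part cell_part -HA.
by rewrite !addrA [RHS]addrAC; congr (_ + _); apply: addrAC.
Qed.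
End Regroup.

Section Independence.
Variables (R : realFieldType) (p : nat) (a : vec R) (J : mat R)
  (E : forall q, 'I_6 -> 'I_q.-1 -> vec R -> R)
  (F : forall q, 'I_4 -> 'I_(dimF q) -> vec R -> R)
  (C : forall q, 'I_(dimC q) -> vec R -> R)
  (B : 'I_36 -> vec R -> mat R) (S : 'I_8 -> mat R) (c : Idx p -> R) (A : 'I_4 -> mat R).

Local Notation phi q := (allbasis R a J E F C q).
Local Notation coefmat := (coefmat J S c A).

Hypothesis HJ : J \in unitmx.
Hypothesis phi_indep : sindep_on (inT a J) (phi p).
Hypothesis phiS_indep : sindep_on (inT a J) (phi p.+1).
Hypothesis B_indep : mindep_on (inT a J) B.
Hypothesis S_tr0 : forall s, \tr (S s) = 0.
Hypothesis S_indep : forall w : 'I_8 -> R, \sum_s w s *: S s = 0 -> forall s, w s = 0.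
Hypothesis HA : forall y, inT a J y -> \sum_i coef_P1 c i *: B i y = \sum_v lam a J v y *: A v.
Hypothesis Hc : forall y, inT a J y -> \sum_x c x *: fam R a J B S E F C p x y = 0.

Lemma regrouped_eq0 y : inT a J y ->
  \sum_h phi p h y *: coefmat h + id_part a J E F C c y *: 1%:M = 0.
Proof. by move=> Ty; rewrite -(fam_regroup E F C S (HA Ty)) Hc. Qed.

Lemma coefmat_scalar h : coefmat h = coefmat h 0 0 *: 1%:M.
Proof. exact: indep_scalar_coefs phi_indep regrouped_eq0 h. Qed.

Lemma coef_edge_eq0 j i :
  (forall b, coef_edge c j i b = 0) /\
  (forall kj, (val kj).2 = j -> forall r, coef_edge_face c kj i r = 0).
Proof.
exact: (edge_block_eq0 HJ (al := coef_edge c j i) (be := coef_edge_face c ^~ i))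
  (coefmat_scalar (inl (inl (inr (j, i))))).
Qed.

Lemma coef_face_eq0 k i :
  (forall r, coef_face c k i r = 0) /\ (forall r, coef_face_normal c k i r = 0).
Proof.
have [[ht hm hn] [htm htn hmn]] := face_frame HJ (minJ_in k).
exact: (face_block_eq0 ht hm hn htm htn hmn (g := coef_face c k i) (d := coef_face_normal c k i))
  (coefmat_scalar (inl (inr (k, i)))).
Qed.

Lemma coef_cell_eq0 i s : coef_cell c i s = 0.
Proof.
have := coefmat_scalar (inr i); rewrite /= /cell_coefmat => hS.
have := congr1 mxtrace hS; rewrite mxtraceZ mxtrace1 raddf_sum big1 => [|s' _]; last first.
  by rewrite /= mxtraceZ S_tr0 mulr0.
move=> /esym/eqP; rewrite mulf_eq0 pnatr_eq0 orbF => /eqP mu0.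
by apply: S_indep s; rewrite hS mu0 scale0r.
Qed.

Lemma edge_coefmat_eq0 j i : edge_coefmat J c j i = 0.
Proof.
have [al0 be0] := coef_edge_eq0 j i.
rewrite /edge_coefmat big1 ?add0r => [|b _]; last by rewrite al0 scale0r.
by rewrite big1 // => kj /eqP hj; rewrite big1 // => r _; rewrite be0 ?scale0r.
Qed.

Lemma face_coefmat_eq0 k i : face_coefmat J c k i = 0.
Proof.
have [g0 d0] := coef_face_eq0 k i.
by rewrite /face_coefmat !big1 ?addr0 // => r _; rewrite ?g0 ?d0 scale0r.
Qed.

Lemma cell_coefmat_eq0 i : cell_coefmat S c i = 0.
Proof. by rewrite /cell_coefmat big1 // => s _; rewrite coef_cell_eq0 scale0r. Qed.

(* The vertex functions coincide in degrees p and p+1, so the vertex part of the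
   (0,0) entry merges with the identity part into one degree-(p+1) combination. *)
Definition id_coefs (h : allIdx p.+1) : R :=
  if h is inl (inl (inl v)) then A v 0 0 else coef_id c h.

Lemma id_coefs_eq0 h : id_coefs h = 0.
Proof.
apply: phiS_indep h => y Ty.
have entry h : (phi p h y *: coefmat h) 0 0 =
    if h is inl (inl (inl v)) then A v 0 0 * lam a J v y else 0.
  case: h => [[[v|[j i]]|[k i]]|i] /=; first by rewrite mxE mulrC.
  - by rewrite edge_coefmat_eq0 scaler0 mxE.
  - by rewrite face_coefmat_eq0 scaler0 mxE.
  - by rewrite cell_coefmat_eq0 scaler0 mxE.
have := congr1 (fun M : mat R => M 0 0) (regrouped_eq0 Ty).
rewrite !mxE summxE eqxx mulr1 => /(etrans _); apply.
under [X in _ = X + _]eq_bigr => h _ do rewrite entry.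
rewrite /id_part !sum_sumType /= !big1_eq !addr0.
rewrite [X in _ = _ + (X + _ + _ + _)]big1 ?add0r => [|v _]; last exact: mul0r.
by rewrite !addrA.
Qed.

Lemma A_eq0 v : A v = 0.
Proof.
have /= -> := coefmat_scalar (inl (inl (inl v))).
by have /= -> := id_coefs_eq0 (inl (inl (inl v))); rewrite scale0r.
Qed.

Lemma coef_P1_eq0 i : coef_P1 c i = 0.
Proof. by apply: B_indep i => y Ty; rewrite HA // big1 // => v _; rewrite A_eq0 scaler0. Qed.

Lemma fam_coef_eq0 x : c x = 0.
Proof.
case: x => [[[[[[i|[[j i] b]]|[[kj i] r]]|[[k i] r]]|[[[j i]|[k i]]|i]]|[[k i] r]]|[i s]].
- exact: coef_P1_eq0.
- exact: (coef_edge_eq0 j i).1.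
- exact: (coef_edge_eq0 (val kj).2 i).2.
- exact: (coef_face_eq0 k i).1.
- exact: (id_coefs_eq0 (inl (inl (inr (j, i))))).
- exact: (id_coefs_eq0 (inl (inr (k, i)))).
- exact: (id_coefs_eq0 (inr i)).
- exact: (coef_face_eq0 k i).2.
- exact: coef_cell_eq0.
Qed.

End Independence.

Theorem mainTheorem3 (R : realFieldType) (p : nat) (a : vec R) (J : mat R)
  (E : forall q, 'I_6 -> 'I_q.-1 -> vec R -> R)
  (F : forall q, 'I_4 -> 'I_(dimF q) -> vec R -> R)
  (C : forall q, 'I_(dimC q) -> vec R -> R)
  (B : 'I_36 -> vec R -> mat R) (S : 'I_8 -> mat R) :
  (2 <= p)%N ->
  J \in unitmx ->
  polytopal_spaces a J E F C ->
  P1mat_basis a J B ->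
  sl3_basis S ->
  mindep_on (inT a J) (fam R a J B S E F C p).
Proof.
move=> p_ge2 HJ HP [B_poly B_indep _] [S_tr0 S_indep _] c Hc.
have [_ _ _ [_ phi_indep _]] := HP p (ltnW p_ge2).
have [_ _ _ [_ phiS_indep _]] := HP p.+1 isT.
have [A HA] := P1_mat_lam HP (polyfun_comb_mx (coef_P1 c) B_poly).
exact: fam_coef_eq0 HJ phi_indep phiS_indep B_indep S_tr0 S_indep HA Hc.
Qed.
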